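(* Let $G$ be a finite simple graph of order $n\ge 3$ and let $e(G)$ denote its number of edges. (a) Suppose every vertex of $G$ lies in a cycle of $G$. Then $crx_1(G)=e(G)$ if and only if $G$ is the cycle $C_n$. (b) Suppose $G$ is $2$-connected. Then $crx_2(G)=e(G)$ if and only if $G$ is minimally $2$-connected. (c) Suppose $G$ is Hamiltonian, and let $1\le k\le n$. Then $crx_k(G)=e(G)$ if and only if $G$ is the cycle $C_n$.
   Context: An edge-coloured cycle is rainbow if its edges have distinct colours. For $k\ge 1$, let $\mathcal F_k$ be the family of graphs in which any $k$ vertices lie in a common cycle. For $G\in\mathcal F_k$, a $k$-rainbow cycle colouring of $G$ is an edge-colouring such that every set of $k$ vertices lies in some rainbow cycle; $crx_k(G)$, the $k$-rainbow cycle index, is the minimum number of colours in a $k$-rainbow cycle colouring of $G$. A graph is minimally $2$-connected if it is $2$-connected and deleting any edge destroys $2$-connectivity. *)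

(* Finite simple graphs as symmetric irreflexive relations
   on a finType. *)
From mathcomp Require Import all_boot.
From Stdlib Require Import ClassicalEpsilon.
Set Implicit Arguments. Unset Strict Implicit. Unset Printing Implicit Defensive.

Section Graphs.
Variables (T : finType) (e : rel T).

Definition edges : {set {set T}} :=
  [set s : {set T} | [exists x, exists y, e x y && (s == [set x; y])]].

Definition gcycle (p : seq T) : Prop :=
  [/\ 3 <= size p, uniq p & path.cycle e p].

Definition cycle_edges (p : seq T) : seq {set T} :=
  [seq [set xy.1; xy.2] | xy <- zip p (rot 1 p)].

(* An edge-colouring is any function on 2-sets of vertices; only its values
   on edges matter. *)
Definition rainbow (c : {set T} -> nat) (p : seq T) : Prop :=
  uniq (map c (cycle_edges p)).

Definition num_colours (c : {set T} -> nat) : nat :=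
  size (undup (map c (enum edges))).

Definition in_F (k : nat) : Prop :=
  forall S : {set T}, #|S| = k ->
    exists p, gcycle p /\ (forall x, x \in S -> x \in p).

Definition k_rainbow_cycle_colouring (k : nat) (c : {set T} -> nat) : Prop :=
  forall S : {set T}, #|S| = k ->
    exists p, [/\ gcycle p, (forall x, x \in S -> x \in p) & rainbow c p].

Definition crx_pred (k m : nat) : Prop :=
  exists c, k_rainbow_cycle_colouring k c /\ num_colours c = m.

Definition pdec (P : Prop) : bool :=
  if excluded_middle_informative P then true else false.

Lemma pdecP (P : Prop) : reflect P (pdec P).
Proof. rewrite /pdec; case: excluded_middle_informative => h; constructor => //. Qed.

(* crx_k(G): the minimum number of colours of a k-rainbow cycle colouring
   (defined as 0 when no such colouring exists, i.e. outside F_k). *)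
Definition crx (k : nat) : nat :=
  match excluded_middle_informative (exists m, crx_pred k m) with
  | left h =>
      @ex_minn (fun m => pdec (crx_pred k m))
        (let: ex_intro m hm := h in ex_intro _ m (introT (pdecP _) hm))
  | right _ => 0
  end.

Definition connected_on (A : {set T}) : Prop :=
  forall x y, x \in A -> y \in A ->
    connect [rel u v | [&& e u v, u \in A & v \in A]] x y.

Definition two_connected : Prop :=
  [/\ 3 <= #|T|, connected_on setT & forall v, connected_on (~: [set v])].

Definition hamiltonian : Prop :=
  exists p, gcycle p /\ size p = #|T|.

Definition cycle_rel (n : nat) (i j : 'I_n) : bool :=
  (val j == (val i).+1 %% n) || (val i == (val j).+1 %% n).

Definition is_cycle_graph : Prop :=
  exists f : 'I_#|T| -> T, bijective f /\
    forall i j, e (f i) (f j) = cycle_rel i j.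

End Graphs.

Definition del_edge (T : finType) (e : rel T) (f : {set T}) : rel T :=
  [rel u v | e u v && ([set u; v] != f)].

Definition min_two_connected (T : finType) (e : rel T) : Prop :=
  two_connected e /\
  forall f, f \in edges e -> ~ two_connected (del_edge e f).

From mathcomp Require Import all_boot.
From Stdlib Require Import Classical ClassicalEpsilon.
Set Implicit Arguments. Unset Strict Implicit. Unset Printing Implicit Defensive.

(* The identity colouring gives crx_k(G) <= e(G) for G in F_k, and crx_k(G) < e(G)
   exactly when two distinct edges f, g are separable: every k-set of vertices lies
   on a cycle not using both.  Indeed f and g may then share a colour, and two edges
   with the same colour in a k-rainbow cycle colouring are separable.
   (c) An edge off a Hamilton cycle H is separable from every edge of H, while in
   C_n every cycle uses all the edges.
   (a) If an edge g lies off a cycle C, take f on C.  Vertices of C use C; a vertex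
   x off C lies on a cycle D, and if D uses f, the ear of D through x between two
   vertices of C closes up with one of the two arcs of C into a cycle through x
   avoiding f.
   (b) Any two vertices of a 2-connected graph lie on a common cycle (Whitney).  If
   G - f is 2-connected, f is separable from the edges of a cycle of G - f.  If G is
   minimally 2-connected, each edge f has a cut vertex w of G - f splitting the
   other vertices into two sides joined only by f, so every cycle meeting both sides
   passes through w and uses f.  For two such separations, either two vertices lie
   on opposite sides of both, or a side of one of them is reduced to the cut vertex
   of the other; either way some pair of vertices forces both edges onto every
   cycle through it. *)

Lemma uniq_map_inj_inP (A B : eqType) (f : A -> B) (s : seq A) :
  uniq s -> reflect {in s &, injective f} (uniq (map f s)).
Proof.
move=> Us; apply: (iffP idP) => [|/map_inj_in_uniq->//].
elim: s Us => [|x s IH] //= /andP[xs Us] /andP[fxs Ufs] y z.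
rewrite !inE => /predU1P[->|ys] /predU1P[->|zs] //.
- by move=> fxz; move: fxs; rewrite fxz map_f.
- by move=> fyx; move: fxs; rewrite -fyx map_f.
- exact: IH.
Qed.

Lemma split_find_last (T : eqType) (P : pred T) s : has P s ->
  exists s1 x s2, [/\ s = s1 ++ x :: s2, P x & ~~ has P s2].
Proof.
elim: s => [|y s IH] //=; case: (boolP (has P s)) => [/IH[s1 [x [s2 [-> Px nP]]]] _|nPs].
  by exists (y :: s1), x, s2.
by rewrite orbF => Py; exists [::], y, s.
Qed.

Lemma next_nth_mod (T : eqType) (h : seq T) x0 i : uniq h -> i < size h ->
  next h (nth x0 h i) = nth x0 h (i.+1 %% size h).
Proof.
case: h => [|y h] // Uh hi; rewrite next_nth mem_nth // index_uniq //=.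
case: (ltnP i (size h)) => [ih|hi']; first by rewrite modn_small ?ltnS // (set_nth_default x0).
have -> : i = size h by apply/eqP; rewrite eqn_leq hi' -ltnS hi.
by rewrite modnn nth_default.
Qed.

Lemma mem_uniq_full (T : finType) (h : seq T) x : uniq h -> size h = #|T| -> x \in h.
Proof.
move=> Uh sh; have sub_h : {subset h <= enum T} by move=> y; rewrite mem_enum.
have [|_ ->] := uniq_min_size Uh sub_h; last by rewrite mem_enum.
by rewrite -cardT sh.
Qed.

Lemma exists_card (T : finType) k : k <= #|T| -> exists S : {set T}, #|S| = k.
Proof.
move=> kT; exists [set x in take k (enum T)].
by rewrite cardsE (card_uniqP _) ?take_uniq ?enum_uniq // size_takel // -cardE.
Qed.

Lemma connect_closed_prop (T : finType) (r : rel T) (P : T -> Prop) x y :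
  (forall a b, P a -> r a b -> P b) -> P x -> connect r x y -> P y.
Proof.
move=> step Px /connectP[p + ->]; elim: p x Px => [|z p IH] x Px //= /andP[xz].
exact: IH (step _ _ Px xz).
Qed.

Lemma connect_subrel (T : finType) (r r' : rel T) :
  subrel r r' -> subrel (connect r) (connect r').
Proof. by move=> sub; apply: connect_sub => a b /sub/connect1. Qed.

Lemma connect_uniq_path (T : finType) (r : rel T) x y :
  connect r x y -> exists p, [/\ path r x p, uniq (x :: p) & last x p = y].
Proof. by case/connectP=> p /shortenP[p' rp' Up' _] ->; exists p'. Qed.

Lemma third_vertex (T : finType) (u v : T) : 3 <= #|T| -> exists z, z != u /\ z != v.
Proof.
move=> T3; have /card_gt0P[z] : 0 < #|~: [set u; v]|.
  rewrite -(leq_add2l #|[set u; v]|) addn1 cardsC (leq_trans _ T3) // cards2.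
  by case: (u != v).
by rewrite !inE negb_or => /andP[]; exists z.
Qed.

(** * Edges of paths and cycles *)

Section CycleEdges.
Variable T : finType.
Implicit Types (p q : seq T) (x y : T).

Lemma set2_eq_cases (a b c d : T) :
  [set a; b] = [set c; d] -> (a = c /\ b = d) \/ (a = d /\ b = c).
Proof.
move=> E.
have ha : a \in [set c; d] by rewrite -E set21.
have hb : b \in [set c; d] by rewrite -E set22.
have hc : c \in [set a; b] by rewrite E set21.
have hd : d \in [set a; b] by rewrite E set22.
move: ha hb hc hd; rewrite !inE.
case/pred2P=> ha; case/pred2P=> hb; subst => //; auto.
- by move=> _ /pred2P[] ->; auto.
- by case/pred2P=> ->; auto.
Qed.

Fixpoint path_edges x q : seq {set T} :=
  if q is y :: q' then [set x; y] :: path_edges y q' else [::].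

Lemma path_edges_cat x q1 q2 :
  path_edges x (q1 ++ q2) = path_edges x q1 ++ path_edges (last x q1) q2.
Proof. by elim: q1 x => [|y q1 IH] x //=; rewrite IH. Qed.

Lemma cycle_edges_cons x q : cycle_edges (x :: q) = path_edges x (rcons q x).
Proof.
rewrite /cycle_edges rot1_cons.
by elim: q x {2 4}x => [|y q IH] x z //=; rewrite IH.
Qed.

Lemma cycle_edges_split x c1 y c2 :
  cycle_edges (x :: c1 ++ y :: c2) =
  path_edges x (rcons c1 y) ++ path_edges y (rcons c2 x).
Proof. by rewrite cycle_edges_cons rcons_cat -[rcons c1 y]cats1 !path_edges_cat -catA. Qed.

Lemma path_edges_meet x q y S : q != [::] ->
  S \in path_edges x (rcons q y) -> exists2 z, z \in S & z \in q.
Proof.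
elim: q x => [|z q IH] x // _ /=; rewrite inE => /predU1P[->|].
  by exists z; rewrite ?set22 ?mem_head.
case: q IH => [|z' q] IH /=.
  by rewrite inE => /eqP->; exists z; rewrite ?set21 ?mem_head.
by case/IH=> // u uS uq; exists u; rewrite // inE uq orbT.
Qed.

Lemma cycle_edges_next p : uniq p ->
  cycle_edges p = [seq [set u; next p u] | u <- p].
Proof.
case: p => [|x q] // Up; rewrite /cycle_edges rot1_cons.
rewrite (_ : [seq _ | u <- x :: q] =
  [seq [set xy.1; xy.2] | xy <- [seq (u, next (x :: q) u) | u <- x :: q]]);
  last by rewrite -map_comp.
congr map; apply: (@eq_from_nth _ (x, x)) => [|i].
  by rewrite size_zip size_map size_rcons minnn.
rewrite size_zip size_rcons minnn => hi.
rewrite nth_zip ?size_rcons // (nth_map x) // next_nth mem_nth // index_uniq //.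
congr pair; rewrite nth_rcons; case: ltnP => [|hq]; first exact: set_nth_default.
by rewrite if_same nth_default.
Qed.

Lemma mem_cycle_edges p S : uniq p ->
  reflect (exists2 u, u \in p & S = [set u; next p u]) (S \in cycle_edges p).
Proof. by move=> Up; rewrite cycle_edges_next //; apply: (iffP mapP). Qed.

Lemma next_in_cycle_edges p x : uniq p -> x \in p ->
  [set x; next p x] \in cycle_edges p.
Proof. by move=> Up px; apply/mem_cycle_edges => //; exists x. Qed.

Lemma prev_in_cycle_edges p x : uniq p -> x \in p ->
  [set x; prev p x] \in cycle_edges p.
Proof.
move=> Up px; rewrite setUC -{2}(next_prev Up x).
by apply: next_in_cycle_edges; rewrite ?mem_prev.
Qed.

Lemma mem_cycle_edges_rot i p S : uniq p ->
  (S \in cycle_edges (rot i p)) = (S \in cycle_edges p).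
Proof.
move=> Up; rewrite !cycle_edges_next ?rot_uniq // map_rot mem_rot.
by under eq_map => u do rewrite next_rot //.
Qed.

Lemma next_next_neq p x : uniq p -> 3 <= size p -> x \in p ->
  next p (next p x) != x.
Proof.
move=> Up p3 px; have [i s def_p] := rot_to px.
rewrite -!(next_rot i Up) def_p.
have : 3 <= size (x :: s) by rewrite -def_p size_rot.
have : uniq (x :: s) by rewrite -def_p rot_uniq.
case: s {def_p} => [|a [|b s]] //= /andP[]; rewrite !inE !negb_or => /and3P[xa xb _] _ _.
by rewrite eqxx [a == x]eq_sym (negbTE xa) eqxx [b == x]eq_sym (negbTE xb).
Qed.

Lemma next_prev_neq p x : uniq p -> 3 <= size p -> x \in p ->
  next p x != prev p x.
Proof.
move=> Up p3 px; have := next_next_neq Up p3 (etrans (mem_prev p x) px).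
by rewrite (next_prev Up).
Qed.

Lemma uniq_cycle_edges p : uniq p -> 3 <= size p -> uniq (cycle_edges p).
Proof.
move=> Up p3; rewrite cycle_edges_next // map_inj_in_uniq // => u v _ pv.
case/set2_eq_cases=> [[]//|[uv vu]].
by move: (next_next_neq Up p3 pv); rewrite -uv vu eqxx.
Qed.

End CycleEdges.

Section Cycles.
Variables (T : finType) (e : rel T).
Hypothesis e_sym : symmetric e.
Implicit Types (p q : seq T) (x y : T).

Lemma edgesP S : reflect (exists x y, e x y /\ S = [set x; y]) (S \in edges e).
Proof.
rewrite inE; apply: (iffP existsP) => [[x /existsP[y /andP[xy /eqP->]]]|[x [y [xy ->]]]].
  by exists x, y.
by exists x; apply/existsP; exists y; rewrite xy eqxx.
Qed.

Lemma edge_in_edges x y : e x y -> [set x; y] \in edges e.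
Proof. by move=> xy; apply/edgesP; exists x, y. Qed.

Lemma cycle_edges_sub p : gcycle e p -> {subset cycle_edges p <= edges e}.
Proof.
by case=> _ Up cp S /(mem_cycle_edges _ Up)[u pu ->]; apply/edge_in_edges/next_cycle.
Qed.

Lemma gcycle_edge p : gcycle e p -> exists S : {set T}, S \in cycle_edges p.
Proof.
by case=> p3 Up _; case: p p3 Up => [|x p] // _ Up; exists [set x; next (x :: p) x];
  apply: next_in_cycle_edges; rewrite ?mem_head.
Qed.

Lemma gcycle_rot i p : gcycle e p -> gcycle e (rot i p).
Proof. by case=> p3 Up cp; split; rewrite ?size_rot ?rot_uniq ?rot_cycle. Qed.

Lemma mem_cycle_edges_sub p S : uniq p -> S \in cycle_edges p -> {subset S <= p}.
Proof.
move=> Up /(mem_cycle_edges _ Up)[u pu ->] z.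
by rewrite !inE => /pred2P[]->; rewrite ?mem_next.
Qed.

Lemma rot_arcs x c1 y c2 : rot (size c1).+1 (x :: c1 ++ y :: c2) = y :: c2 ++ x :: c1.
Proof. exact: (rot_size_cat (x :: c1)). Qed.

Lemma gcycle_rot_to p x : gcycle e p -> x \in p ->
  exists q, gcycle e (x :: q) /\ p =i x :: q.
Proof.
move=> cp px; have [i q def_p] := rot_to px; exists q; rewrite -def_p.
by split=> [|z]; [apply: gcycle_rot | rewrite mem_rot].
Qed.

Lemma gcycle_split p a b : gcycle e p -> a \in p -> b \in p -> a != b ->
  exists c1 c2, [/\ gcycle e (a :: c1 ++ b :: c2), p =i a :: c1 ++ b :: c2
                   & cycle_edges p =i cycle_edges (a :: c1 ++ b :: c2)].
Proof.
move=> cp pa pb ab; have [_ Up _] := cp.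
case: (rot_to_arc Up pa pb ab) => i c1 c2 _ _ def_p; exists c1, c2.
rewrite -def_p; split; first exact: gcycle_rot.
  by move=> z; rewrite mem_rot.
by move=> S; rewrite mem_cycle_edges_rot.
Qed.

Lemma cycle_split x c1 y c2 :
  cycle e (x :: c1 ++ y :: c2) = path e x (rcons c1 y) && path e y (rcons c2 x).
Proof. by rewrite /= rcons_cat cat_path /= !rcons_path !andbA. Qed.

Lemma gcycle_join x c1 y c2 :
  path e x (rcons c1 y) -> path e y (rcons c2 x) ->
  uniq (x :: c1 ++ y :: c2) -> c1 ++ c2 != [::] ->
  gcycle e (x :: c1 ++ y :: c2).
Proof.
move=> p1 p2 U ne; split=> //; last by rewrite cycle_split p1.
by rewrite /= size_cat /= addnS !ltnS lt0n -size_cat size_eq0.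
Qed.

Lemma path_rev_rcons x q y : path e x (rcons q y) -> path e y (rcons (rev q) x).
Proof.
have := rev_path e x (rcons q y); rewrite last_rcons belast_rcons rev_cons => ->.
by rewrite (@eq_path _ _ e) // => u v /=; rewrite e_sym.
Qed.

Lemma gcycle_ear x c1 y c2 q :
  gcycle e (x :: c1 ++ y :: c2) -> path e y (rcons q x) -> q != [::] -> uniq q ->
  [disjoint q & x :: c1 ++ y :: c2] -> gcycle e (x :: c1 ++ y :: q).
Proof.
case=> _ U; rewrite cycle_split => /andP[p1 _] pq nq Uq qC.
apply: gcycle_join => //; last by case: (c1) nq; case: (q).
move: U; rewrite -!cat_rcons -!cat_cons !cat_uniq Uq => /andP[-> _] /=.
rewrite andbT -disjoint_has; apply: (disjointWr _ qC); apply/subsetP => z.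
by rewrite -cat_rcons -cat_cons mem_cat => ->.
Qed.

End Cycles.

(** * Separable pairs of edges and the rainbow cycle index *)

Section RainbowCycleIndex.
Variables (T : finType) (e : rel T).
Implicit Types (c : {set T} -> nat) (f g : {set T}).

Definition separable k f g :=
  [/\ f \in edges e, g \in edges e, f != g &
   forall S : {set T}, #|S| = k -> exists p, [/\ gcycle e p,
     (forall x, x \in S -> x \in p) &
     ~~ ((f \in cycle_edges p) && (g \in cycle_edges p))]].

Lemma rainbowP c p : gcycle e p ->
  rainbow c p <-> {in cycle_edges p &, injective c}.
Proof.
case=> p3 Up _; have c_inj := uniq_map_inj_inP c (uniq_cycle_edges Up p3).
by split=> /c_inj.
Qed.

Lemma num_colours_lt c :
  (num_colours e c < #|edges e|) = ~~ uniq (map c (enum (edges e))).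
Proof. by rewrite /num_colours cardE -(size_map c) ltn_size_undup. Qed.

Lemma crx_min k m : crx_pred e k m -> crx e k <= m.
Proof.
move=> km; rewrite /crx; case: excluded_middle_informative => [ex|[]]; last by exists m.
by case: ex_minnP => m' _; apply; apply/pdecP.
Qed.

Lemma crx_predP k m : crx_pred e k m -> crx_pred e k (crx e k).
Proof.
move=> km; rewrite /crx; case: excluded_middle_informative => [ex|[]]; last by exists m.
by case: ex_minnP => m' /pdecP.
Qed.

Definition edge_index f := index f (enum (edges e)).

Lemma edge_index_inj : {in edges e &, injective edge_index}.
Proof.
move=> f g fE gE eq_fg.
by rewrite -(nth_index f (_ : f \in enum (edges e))) ?mem_enum // -/(edge_index f)
  eq_fg /edge_index nth_index ?mem_enum.
Qed.

Lemma crx_pred_edge_index k : in_F e k -> crx_pred e k #|edges e|.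
Proof.
move=> Fk; exists edge_index; split.
  move=> S /Fk[p [cp Sp]]; exists p; split=> //.
  apply/rainbowP => // f g /(cycle_edges_sub cp) fE /(cycle_edges_sub cp) gE.
  exact: edge_index_inj.
rewrite /num_colours undup_id ?size_map -?cardE //.
by apply/uniq_map_inj_inP => [|f g]; rewrite ?enum_uniq ?mem_enum //; apply: edge_index_inj.
Qed.

Lemma separable_crx_lt k f g : in_F e k -> separable k f g ->
  crx e k < #|edges e|.
Proof.
move=> Fk [fE gE fg sep_fg].
pose c h := edge_index (if h == g then f else h).
have c_inj p : gcycle e p -> ~~ ((f \in cycle_edges p) && (g \in cycle_edges p)) ->
    {in cycle_edges p &, injective c}.
  move=> cp nfg h h' /[dup] ph /(cycle_edges_sub cp) hE /[dup] ph' /(cycle_edges_sub cp) h'E.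
  rewrite /c; case: (eqVneq h g) => [hg|hg]; case: (eqVneq h' g) => [h'g|h'g].
  - by rewrite hg h'g.
  - by move/(edge_index_inj fE h'E) => fh'; rewrite fh' ph' -hg ph in nfg.
  - by move/(edge_index_inj hE fE) => hf; rewrite -hf ph -h'g ph' in nfg.
  - exact: edge_index_inj.
apply: leq_ltn_trans (_ : crx e k <= num_colours e c) _.
  apply: crx_min; exists c; split=> // S /sep_fg[p [cp Sp nfg]].
  by exists p; split=> //; apply/rainbowP => //; apply: c_inj.
rewrite num_colours_lt; apply/negP => /(uniq_map_inj_inP _ (enum_uniq _)) c_enum_inj.
by apply/negP: fg; rewrite (c_enum_inj f g) ?mem_enum ?eqxx // /c eqxx if_same.
Qed.

Lemma crx_lt_separable k : in_F e k -> crx e k < #|edges e| ->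
  exists f g, separable k f g.
Proof.
move=> Fk; have [c [c_rainbow <-]] := crx_predP (crx_pred_edge_index Fk).
rewrite num_colours_lt => /(uniq_map_inj_inP _ (enum_uniq _)) c_not_inj.
have [f [g [fE gE fg cfg]]] : exists f g,
    [/\ f \in edges e, g \in edges e, f != g & c f = c g].
  apply: NNPP => none; apply: c_not_inj => f g; rewrite !mem_enum => fE gE cfg.
  by apply: NNPP => fg; apply: none; exists f, g; split=> //; apply/eqP.
exists f, g; split=> // S /c_rainbow[p [cp Sp /(rainbowP _ cp) c_inj]].
exists p; split=> //; apply/negP => /andP[pf pg].
by rewrite (c_inj f g) ?eqxx in fg.
Qed.

Lemma crx_eq_size_edges k : in_F e k ->
  crx e k = #|edges e| <-> ~ exists f g, separable k f g.
Proof.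
move=> Fk; have crx_le := crx_min (crx_pred_edge_index Fk); split.
  by move=> crx_eq [f [g /(separable_crx_lt Fk)]]; rewrite crx_eq ltnn.
move=> no_sep; apply/eqP; rewrite eqn_leq crx_le leqNgt; apply/negP.
by move/(crx_lt_separable Fk).
Qed.

End RainbowCycleIndex.

(** * Cycle graphs *)

Section CycleGraph.
Variables (T : finType) (e : rel T).
Hypothesis e_sym : symmetric e.
Implicit Types (h p : seq T) (x y : T).

Definition chordless_hamiltonian h :=
  [/\ gcycle e h, size h = #|T| & {subset edges e <= cycle_edges h}].

Lemma chordless_adj h x y : chordless_hamiltonian h -> e x y ->
  y = next h x \/ x = next h y.
Proof.
case=> [[_ Uh _] _ hE] /edge_in_edges/hE/(mem_cycle_edges _ Uh)[u _].
by case/set2_eq_cases=> [[-> ->]|[-> ->]]; [left|right].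
Qed.

Lemma chordless_next_in_cycle h p x : chordless_hamiltonian h -> gcycle e p ->
  x \in p -> next h x \in p /\ [set x; next h x] \in cycle_edges p.
Proof.
move=> hh [p3 Up cp] px; have [[_ Uh _] sh _] := hh.
have nbr y : e x y -> y = next h x \/ y = prev h x.
  by case/(chordless_adj hh) => [|->]; [left|right; rewrite (prev_next Uh)].
suff [->|->] : next h x = next p x \/ next h x = prev p x.
- by rewrite mem_next next_in_cycle_edges.
- by rewrite mem_prev prev_in_cycle_edges.
case: (nbr _ (next_cycle cp px)) => [->|np]; first by left.
case: (nbr (prev p x)) => [|->|pp]; first by rewrite e_sym prev_cycle.
  by right.
by move: (next_prev_neq Up p3 px); rewrite np pp eqxx.
Qed.

Lemma chordless_cycle_edges h p : chordless_hamiltonian h -> gcycle e p ->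
  {subset edges e <= cycle_edges p}.
Proof.
move=> hh cp; have [[_ Uh _] sh hE] := hh.
have [z pz] : exists z, z \in p.
  by case: cp => p3 _ _; case: p p3 => [|z p] // _; exists z; rewrite mem_head.
have pT x : x \in p.
  have /iter_findex <- : fconnect (next h) z x.
    by rewrite (fconnect_cycle (cycle_next Uh)) ?mem_uniq_full.
  by elim: (findex _ z x) => [|n IHn] //=; case: (chordless_next_in_cycle hh cp IHn).
move=> S /hE /(mem_cycle_edges _ Uh)[u _ ->].
by case: (chordless_next_in_cycle hh cp (pT u)).
Qed.

Lemma chordless_no_separable h k : chordless_hamiltonian h -> k <= #|T| ->
  ~ exists f g, separable e k f g.
Proof.
move=> hh kT [f [g [fE gE _ sep_fg]]]; have [S /sep_fg[p [cp _]]] := exists_card kT.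
by rewrite !(chordless_cycle_edges hh cp).
Qed.

Lemma chordless_is_cycle_graph h : chordless_hamiltonian h -> is_cycle_graph e.
Proof.
move=> hh; have [[h3 Uh ch] sh _] := hh.
have [x0 _] : exists x0 : T, true by case: (h) h3 => [|x0] //; exists x0.
have T0 : 0 < #|T| by rewrite -sh (leq_trans _ h3).
pose f (i : 'I_#|T|) := nth x0 h i.
have f_inj : injective f by move=> i j /eqP; rewrite nth_uniq ?sh // => /eqP/val_inj.
have f_next (i : 'I_#|T|) : next h (f i) = nth x0 h (i.+1 %% #|T|).
  by rewrite next_nth_mod ?sh.
have f_eq (i j : 'I_#|T|) : (f j == nth x0 h (i.+1 %% #|T|)) = (val j == i.+1 %% #|T|).
  by rewrite nth_uniq ?sh ?ltn_mod.
have hf i : f i \in h by rewrite mem_nth ?sh.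
exists f; split; first by apply: inj_card_bij; rewrite ?card_ord.
move=> i j; rewrite /cycle_rel -!f_eq -!f_next.
apply/idP/orP => [/(chordless_adj hh)[]->|[]/eqP->]; rewrite ?eqxx; auto.
  exact: next_cycle ch (hf i).
by rewrite e_sym; apply: next_cycle ch (hf j).
Qed.

Lemma is_cycle_graph_chordless : 3 <= #|T| -> is_cycle_graph e ->
  exists h, chordless_hamiltonian h.
Proof.
move=> T3 [f [fbij fe]]; have [g fK gK] := fbij.
pose h := [seq f i | i <- enum 'I_#|T|].
have Uh : uniq h by rewrite map_inj_uniq ?enum_uniq //; apply: bij_inj.
have sh : size h = #|T| by rewrite size_map size_enum_ord.
have hf i : f i \in h by rewrite map_f ?mem_enum.
have f_next i : next h (f i) = f (ordS i).
  have h_nth (j : 'I_#|T|) : nth (f i) h j = f j.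
    by rewrite (nth_map i) ?size_enum_ord // nth_ord_enum.
  by rewrite -[in LHS]h_nth next_nth_mod ?sh // -(h_nth (ordS i)).
have adj_next i : e (f i) (f (ordS i)) by rewrite fe /cycle_rel eqxx.
exists h; split=> //.
  split; rewrite ?sh //; apply: cycle_from_next => // _ /mapP[i _ ->].
  by rewrite f_next.
have ordS_eq (i j : 'I_#|T|) : val j == (val i).+1 %% #|T| -> j = ordS i.
  by move=> /eqP ji; apply: val_inj; rewrite /= ji.
move=> S /edgesP[x [y [xy ->]]]; rewrite -(gK x) -(gK y) in xy *.
move: xy; rewrite fe /cycle_rel => /orP[] /ordS_eq ->.
  by rewrite -f_next next_in_cycle_edges.
by rewrite setUC -f_next next_in_cycle_edges.
Qed.

Lemma hamiltonian_crx_eq k : hamiltonian e -> k <= #|T| ->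
  crx e k = #|edges e| <-> is_cycle_graph e.
Proof.
move=> [h [ch sh]] kT; have [h3 Uh _] := ch.
have Fk : in_F e k by move=> S _; exists h; split=> // x _; apply: mem_uniq_full.
rewrite crx_eq_size_edges //; split=> [no_sep|/is_cycle_graph_chordless[|h' hh']].
- apply: (chordless_is_cycle_graph (h := h)); split=> // S SE.
  apply: contraT => Sh; case: no_sep; have [f hf] := gcycle_edge ch.
  exists f, S; split=> //; first exact: (cycle_edges_sub ch).
    by apply/eqP => fS; rewrite -fS hf in Sh.
  move=> S' _; exists h; split=> // [x _|]; first exact: mem_uniq_full.
  by rewrite (negbTE Sh) andbF.
- by rewrite -sh.
- exact: chordless_no_separable hh' kT.
Qed.

End CycleGraph.

(** * Ears *)

Section Ears.
Variables (T : finType) (e : rel T).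
Hypotheses (e_sym : symmetric e) (e_irr : irreflexive e).
Implicit Types (p q : seq T) (x y : T).

Lemma mem_cycle_edges_ear x c1 y q (C : seq T) (S : {set T}) :
  q != [::] -> [disjoint q & C] -> {subset S <= C} ->
  S \in cycle_edges (x :: c1 ++ y :: q) -> S \in path_edges x (rcons c1 y).
Proof.
move=> nq qC SC; rewrite cycle_edges_split mem_cat => /orP[//|].
by case/(path_edges_meet nq) => z /SC zC zq; rewrite (disjointFl qC zC) in zq.
Qed.

(* Both ends of f lie on C, so f is not an edge of the ear; hence f lies on at most
   one of the two cycles formed by the ear and an arc of C. *)
Lemma ear_avoiding_edge s c1 t c2 q (f : {set T}) (C := s :: c1 ++ t :: c2) :
  gcycle e C -> f \in cycle_edges C -> {subset f <= C} ->
  path e s (rcons q t) -> q != [::] -> uniq q -> [disjoint q & C] ->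
  exists D, [/\ gcycle e D, {subset q <= D} & f \notin cycle_edges D].
Proof.
move=> cC fC fCv sqt nq Uq qC.
have cC' : gcycle e (t :: c2 ++ s :: c1) by rewrite -rot_arcs; apply: gcycle_rot.
have C'C : t :: c2 ++ s :: c1 =i C by move=> z; rewrite -rot_arcs mem_rot.
have nrq : rev q != [::] by rewrite -size_eq0 size_rev size_eq0.
have rqC : [disjoint rev q & C] by rewrite disjoint_has has_rev -disjoint_has.
have q'C : [disjoint q & t :: c2 ++ s :: c1] by rewrite (eq_disjoint_r C'C).
have fC'v : {subset f <= t :: c2 ++ s :: c1} by move=> z /fCv; rewrite C'C.
case: (boolP (f \in cycle_edges (s :: c1 ++ t :: rev q))) => f1; last first.
  exists (s :: c1 ++ t :: rev q); split=> //.
    by apply: gcycle_ear cC (path_rev_rcons e_sym sqt) nrq _ rqC; rewrite rev_uniq.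
  by move=> z zq; rewrite !(inE, mem_cat) mem_rev zq !orbT.
exists (t :: c2 ++ s :: q); split.
- exact: gcycle_ear cC' sqt nq Uq q'C.
- by move=> z zq; rewrite !(inE, mem_cat) zq !orbT.
apply/negP => f2; have [C3 UC _] := cC.
have := uniq_cycle_edges UC C3; rewrite cycle_edges_split cat_uniq => /and3P[_ /hasPn + _].
move/(_ f (mem_cycle_edges_ear nq q'C fC'v f2)); apply/negP/negPn.
exact: (mem_cycle_edges_ear nrq rqC fCv f1).
Qed.

(* The ear is the arc of D around x between the last vertex of C before x and the
   first one after it. *)
Lemma cycle_ear_through D (C : seq T) x a b : gcycle e D -> x \in D -> x \notin C ->
  a \in D -> b \in D -> a \in C -> b \in C -> a != b ->
  exists s t q, [/\ path e s (rcons q t), uniq q, x \in q, [disjoint q & C]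
                  & [/\ s \in C, t \in C & s != t]].
Proof.
move=> cD Dx xC Da Db Ca Cb ab.
have [d [cd Dd]] := gcycle_rot_to cD Dx.
have d_C z : z \in D -> z \in C -> z \in d.
  by move=> + zC; rewrite Dd inE => /predU1P[zx|//]; rewrite -zx zC in xC.
have hd : has (mem C) d by apply/hasP; exists a; rewrite ?d_C.
case/split_find: d _ _ / hd cd Dd d_C => t r1 d1 Ct nr1 cd Dd d_C.
have /split_find_last[m [s [r2 [d1E Cs nr2]]]] : has (mem C) d1.
  have off_r1 z : z \in C -> z \in D -> z = t \/ z \in d1.
    move=> zC /d_C /(_ zC); rewrite mem_cat mem_rcons inE -orbA => /or3P[/eqP|zr1|]; auto.
    by case/negP: nr1; apply/hasP; exists z.
  case: (off_r1 a Ca Da) => [at_|ad1]; last by apply/hasP; exists a.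
  case: (off_r1 b Cb Db) => [bt|bd1]; last by apply/hasP; exists b.
  by rewrite at_ bt eqxx in ab.
subst d1.
have [_ Ue ce] : gcycle e (s :: (r2 ++ x :: r1) ++ t :: m).
  have := gcycle_rot (size (x :: rcons r1 t ++ m)) cd.
  by rewrite -cat_cons catA rot_size_cat /= cat_rcons -catA.
exists s, t, (r2 ++ x :: r1); split.
- by move: ce; rewrite cycle_split => /andP[].
- by move: Ue; rewrite cons_uniq cat_uniq => /andP[_ /andP[]].
- by rewrite mem_cat mem_head orbT.
- by rewrite disjoint_has has_cat /= negb_or nr2 negb_or xC.
- split=> //; apply: contraTneq Ue => ->.
  by rewrite cons_uniq mem_cat mem_head orbT.
Qed.

Lemma cycle_avoiding_edge C D x (f : {set T}) :
  gcycle e C -> f \in cycle_edges C -> gcycle e D -> x \in D -> x \notin C ->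
  exists D', [/\ gcycle e D', x \in D' & f \notin cycle_edges D'].
Proof.
move=> cC fC cD Dx xC; case: (boolP (f \in cycle_edges D)) => fD; last by exists D.
have [_ UC cycC] := cC; have [_ UD _] := cD.
have /(mem_cycle_edges _ UC)[a Ca fE] := fC.
have Cb : next C a \in C by rewrite mem_next.
have ab : a != next C a by apply: contraTneq (next_cycle cycC Ca) => <-; rewrite e_irr.
have fDv := mem_cycle_edges_sub UD fD; have fCv := mem_cycle_edges_sub UC fC.
have Da : a \in D by rewrite fDv // fE set21.
have Db : next C a \in D by rewrite fDv // fE set22.
have [s [t [q [sqt Uq xq qC [Cs Ct st]]]]] := cycle_ear_through cD Dx xC Da Db Ca Cb ab.
have [c1 [c2 [cC' CC' EC]]] := gcycle_split cC Cs Ct st.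
have nq : q != [::] by apply: contraTneq xq => ->.
have fC' : f \in cycle_edges (s :: c1 ++ t :: c2) by rewrite -EC.
have fCv' : {subset f <= s :: c1 ++ t :: c2} by move=> z /fCv; rewrite CC'.
have qC' : [disjoint q & s :: c1 ++ t :: c2] by rewrite -(eq_disjoint_r CC').
have [D' [cD' qD' fD']] := ear_avoiding_edge cC' fC' fCv' sqt nq Uq qC'.
by exists D'; rewrite qD'.
Qed.

End Ears.

Section CycleCover.
Variables (T : finType) (e : rel T).
Hypotheses (e_sym : symmetric e) (e_irr : irreflexive e).
Hypothesis cover : forall v : T, exists p, gcycle e p /\ v \in p.

Lemma cycle_with_all_edges_chordless C : gcycle e C ->
  {subset edges e <= cycle_edges C} -> chordless_hamiltonian e C.
Proof.
move=> cC allC; have [_ UC _] := cC; split=> //.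
have CT x : x \in C.
  have [D [cD Dx]] := cover x; have [_ UD cycD] := cD.
  have /allC/(mem_cycle_edges_sub UC) := edge_in_edges (next_cycle cycD Dx).
  by apply; rewrite set21.
by rewrite -(card_uniqP UC) cardT; apply: eq_cardT.
Qed.

Lemma separable_off_cycle C (f g : {set T}) : gcycle e C -> f \in cycle_edges C ->
  g \in edges e -> g \notin cycle_edges C -> separable e 1 f g.
Proof.
move=> cC fC gE gC; split=> //; first exact: (cycle_edges_sub cC).
  by apply: contraNneq gC => <-.
move=> S /eqP/cards1P[x ->]; have xS y : y \in [set x] -> y = x by move/set1P.
case: (boolP (x \in C)) => xC.
  by exists C; split=> [//|y /xS->//|]; rewrite (negbTE gC) andbF.
have [D [cD Dx]] := cover x.
have [D' [cD' xD' fD']] := cycle_avoiding_edge e_sym e_irr cC fC cD Dx xC.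
by exists D'; split=> [//|y /xS->//|]; rewrite (negbTE fD').
Qed.

Lemma cycle_cover_crx1_eq : 3 <= #|T| ->
  crx e 1 = #|edges e| <-> is_cycle_graph e.
Proof.
move=> T3; have F1 : in_F e 1.
  by move=> S /eqP/cards1P[x ->]; have [p [cp px]] := cover x; exists p; split=> // y /set1P->.
rewrite crx_eq_size_edges //; split=> [no_sep|/(is_cycle_graph_chordless T3)[h hh]].
  have /card_gt0P[v _] : 0 < #|T| by apply: leq_trans T3.
  have [C [cC _]] := cover v.
  apply/(chordless_is_cycle_graph e_sym)/(cycle_with_all_edges_chordless cC) => g gE.
  apply: contraT => gC; case: no_sep; have [f fC] := gcycle_edge cC.
  by exists f, g; apply: separable_off_cycle cC fC gE gC.
exact: chordless_no_separable hh (leq_trans _ T3).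
Qed.

End CycleCover.

(** * Two-connected graphs *)

Section TwoConnected.
Variables (T : finType) (e : rel T).
Hypotheses (e_sym : symmetric e) (e_irr : irreflexive e).
Implicit Types (f : {set T}) (p q : seq T) (u v w x y z : T).

Definition rel_on (r : rel T) (A : {set T}) : rel T :=
  [rel a b | [&& r a b, a \in A & b \in A]].

Lemma rel_on_sub (r : rel T) A : subrel (rel_on r A) r.
Proof. by move=> a b /and3P[]. Qed.

Lemma rel_on_sym (r : rel T) A : symmetric r -> symmetric (rel_on r A).
Proof. by move=> r_sym a b; rewrite /rel_on /= r_sym; congr (_ && _); rewrite andbC. Qed.

Lemma del_edge_sym f : symmetric (del_edge e f).
Proof. by move=> a b; rewrite /del_edge /= e_sym setUC. Qed.

Lemma del_edge_sub f : subrel (del_edge e f) e.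
Proof. by move=> a b /andP[]. Qed.

Lemma del_edge_irr f : irreflexive (del_edge e f).
Proof. by move=> a; rewrite /del_edge /= e_irr. Qed.

Lemma rel_on_del_edge f v : v \in f ->
  subrel (rel_on e [set~ v]) (rel_on (del_edge e f) [set~ v]).
Proof.
move=> vf a b /and3P[ab av bv]; rewrite /rel_on /del_edge /= ab av bv /= andbT.
by apply: contraTneq vf => <-; rewrite !inE negb_or eq_sym -in_setC1 av eq_sym -in_setC1 bv.
Qed.

Lemma del_edge_connected f : two_connected e -> f \in edges e ->
  connected_on (del_edge e f) setT.
Proof.
move=> [T3 _ e_2conn] /edgesP[s [t [st ->]]] x y _ _.
have [z [zs zt]] := third_vertex s t T3.
have s_t : s != t by apply: contraTneq st => ->; rewrite e_irr.
have sub v : v \in [set s; t] ->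
    subrel (rel_on e [set~ v]) (rel_on (del_edge e [set s; t]) setT).
  by move=> vf a b /(rel_on_del_edge vf)/and3P[ab _ _]; apply/and3P; split; rewrite ?inE.
have conn_z a : connect (rel_on (del_edge e [set s; t]) setT) z a.
  case: (eqVneq a s) => [->|a_s].
    by apply: connect_subrel (sub t (set22 s t)) _ _ (e_2conn t z s _ _); rewrite !inE.
  by apply: connect_subrel (sub s (set21 s t)) _ _ (e_2conn s z a _ _); rewrite !inE.
have R_sym := sym_connect_sym (rel_on_sym [set: T] (del_edge_sym [set s; t])).
by apply: connect_trans (conn_z y); rewrite R_sym.
Qed.

Lemma edge_on_cycle u v : two_connected e -> e u v ->
  exists p, [/\ gcycle e p, u \in p & v \in p].
Proof.
move=> G2 uv; have u_v : u != v by apply: contraTneq uv => ->; rewrite e_irr.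
have := del_edge_connected G2 (edge_in_edges uv) (in_setT v) (in_setT u).
case/(connect_subrel (@rel_on_sub _ _))/connect_uniq_path => p [vp Up pu].
case: p vp Up pu => [|a [|b p']] vp Up pu; first by rewrite -pu eqxx in u_v.
  by move: vp pu => /= /andP[/andP[_ av] _] au; rewrite au setUC eqxx in av.
exists (v :: a :: b :: p'); split; rewrite ?mem_head //.
  split=> //; rewrite -[cycle e _]/(path e v (rcons (a :: b :: p') v)) rcons_path pu uv andbT.
  exact: sub_path (@del_edge_sub _) _ _ vp.
by rewrite -pu mem_last.
Qed.

(* A path from v to u avoiding w first meets C at some z; the ear w v ... z closes
   up with the arc of C between z and w that contains u. *)
Lemma cycle_extend C u w v : two_connected e -> gcycle e C ->
  u \in C -> w \in C -> w != u -> e w v -> v \notin C ->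
  exists p, [/\ gcycle e p, u \in p & v \in p].
Proof.
move=> [_ _ e_2conn] cC Cu Cw wu wv vC.
have v_w : v != w by apply: contraTneq wv => ->; rewrite e_irr.
have u_v : u != v by apply: contraNneq vC => <-.
have /connect_uniq_path[p [vp Up pu]] : connect (rel_on e [set~ w]) v u.
  by apply: e_2conn; rewrite !inE // eq_sym.
have hp : has (mem C) p.
  by apply/hasP; exists u => //; move: (mem_last v p); rewrite pu inE (negbTE u_v).
case/split_find: p _ _ / hp vp Up {pu} => z r1 p2 Cz nr1.
rewrite cat_path -cat_cons cat_uniq => /andP[vz _] /andP[Uvz _].
have w_z : w != z.
  by move: vz; rewrite rcons_path => /andP[_ /and3P[_ _]]; rewrite in_setC1 eq_sym.
have {}vz : path e v (rcons r1 z) := sub_path (@rel_on_sub _ _) vz.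
have [c1 [c2 [cC' CC' _]]] := gcycle_split cC Cw Cz w_z.
have Uq : uniq (v :: r1) by move: Uvz; rewrite -cats1 -cat_cons cat_uniq => /andP[].
have qC : [disjoint v :: r1 & C] by rewrite disjoint_has /= negb_or vC.
have q'q : rcons (rev r1) v =i v :: r1 by move=> y; rewrite mem_rcons inE mem_rev.
move: Cu; rewrite CC' !(inE, mem_cat) eq_sym (negbTE wu) /=.
case: (boolP (u \in c2)) => [uc2 _|_]; last rewrite orbF => u1.
  exists (z :: c2 ++ w :: v :: r1); split.
  - apply: (gcycle_ear (c2 := c1)); rewrite ?rcons_cons /= ?wv //.
    + by rewrite -rot_arcs; apply: gcycle_rot.
    + by rewrite (eq_disjoint_r (_ : _ =i C)) // => y; rewrite -rot_arcs mem_rot CC'.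
  - by rewrite inE mem_cat uc2 orbT.
  - by rewrite !(inE, mem_cat) eqxx !orbT.
exists (w :: c1 ++ z :: rcons (rev r1) v); split.
- apply: gcycle_ear cC' _ _ _ _.
  + by rewrite rcons_path path_rev_rcons // last_rcons e_sym.
  + by rewrite -size_eq0 size_rcons.
  + by rewrite rcons_uniq mem_rev rev_uniq.
  + by rewrite (eq_disjoint q'q) (eq_disjoint_r (_ : _ =i C)).
- by rewrite !(inE, mem_cat); case/orP: u1 => ->; rewrite ?orbT.
- by rewrite !(inE, mem_cat, mem_rcons) eqxx !orbT.
Qed.

Lemma two_connected_cycle_through u v : two_connected e -> u != v ->
  exists p, [/\ gcycle e p, u \in p & v \in p].
Proof.
move=> G2 u_v; have [_ e_conn _] := G2.
pose P y := y = u \/ exists p, [/\ gcycle e p, u \in p & y \in p].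
suff [vu|//] : P v by rewrite vu eqxx in u_v.
apply: (connect_closed_prop (r := e) (P := P) _ (or_introl erefl)).
  move=> a b Pa ab; case: (eqVneq b u) => [->|b_u]; first by left.
  right; case: Pa => [au|[C [cC Cu Ca]]]; first by rewrite -au; apply: edge_on_cycle.
  case: (boolP (b \in C)) => Cb; first by exists C.
  case: (eqVneq a u) => [au|a_u]; first by rewrite -au; apply: edge_on_cycle.
  exact: cycle_extend G2 cC Cu Ca a_u ab Cb.
exact: connect_subrel (@rel_on_sub _ _) _ _ (e_conn u v (in_setT u) (in_setT v)).
Qed.

Lemma two_connected_in_F2 : two_connected e -> in_F e 2.
Proof.
move=> G2 S /eqP/cards2P[x [y [xy ->]]].
have [p [cp px py]] := two_connected_cycle_through G2 xy.
by exists p; split=> // z /set2P[]->.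
Qed.

End TwoConnected.

Section Separation.
Variables (T : finType) (e : rel T).
Hypotheses (e_sym : symmetric e) (e_irr : irreflexive e).
Implicit Types (f g X Y : {set T}) (p q : seq T) (w x y : T).

Definition separation f w X Y :=
  [/\ X :|: Y = [set~ w], [disjoint X & Y],
      exists s t, [/\ s \in X, t \in Y & f = [set s; t]]
    & forall x y, x \in X -> y \in Y -> e x y -> [set x; y] = f].

Lemma separation_sym f w X Y : separation f w X Y -> separation f w Y X.
Proof.
case=> XY dXY [s [t [sX tY ->]]] cross; split.
- by rewrite setUC.
- by rewrite disjoint_sym.
- by exists t, s; rewrite setUC.
- by move=> x y xY yX xy; rewrite setUC -(cross y x) // e_sym.
Qed.

Lemma separation_side f w X Y x : separation f w X Y ->
  x != w -> x \notin X -> x \in Y.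
Proof.
case=> /setP/(_ x) + _ _ _ xw; rewrite !inE xw.
by case/orP=> [->|].
Qed.

Lemma separation_cover f w X Y (A : {set T}) : separation f w X Y ->
  [disjoint A & X] -> [disjoint A & Y] -> A \subset [set w].
Proof.
move=> sep AX AY; apply/subsetP => z zA; rewrite inE; apply: contraT => zw.
by have := separation_side sep zw (negbT (disjointFr AX zA)); rewrite (disjointFr AY zA).
Qed.

Lemma separation_path_edges f w X Y x q y : separation f w X Y ->
  path e x (rcons q y) -> x \in X -> y \in Y -> w \notin q ->
  f \in path_edges x (rcons q y).
Proof.
move=> sep; have [_ _ _ cross] := sep.
elim: q x => [|z q IH] x /=.
  by rewrite andbT => xy xX yY _; rewrite (cross x y) ?mem_head.
case/andP=> xz zqy xX yY; rewrite inE negb_or eq_sym => /andP[zw wq].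
case: (boolP (z \in X)) => zX; first by rewrite inE IH ?orbT.
by rewrite (cross x z) ?mem_head ?(separation_side sep).
Qed.

(* Both arcs of p between a and b cross from X to Y, so each arc missing w uses f;
   but the two arcs share no edge. *)
Lemma separation_cycle f w X Y p a b : separation f w X Y -> gcycle e p ->
  a \in p -> a \in X -> b \in p -> b \in Y -> w \in p /\ f \in cycle_edges p.
Proof.
move=> sep cp pa aX pb bY; have [_ dXY _ _] := sep.
have ab : a != b by apply: contraTneq bY => <-; rewrite (disjointFr dXY aX).
have [c1 [c2 [[p3 U cyc] pE EE]]] := gcycle_split cp pa pb ab.
move: cyc; rewrite cycle_split => /andP[ab_path ba_path].
have f1 := separation_path_edges sep ab_path aX bY.
have f2 := separation_path_edges (separation_sym sep) ba_path bY aX.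
have := uniq_cycle_edges U p3; rewrite cycle_edges_split cat_uniq => /and3P[_ /hasPn f12 _].
have c1c2 : w \in c1 -> w \notin c2.
  move: U; rewrite -cat_cons cat_uniq => /and3P[_ /hasPn c1_c2 _] wc1.
  apply: contraL wc1 => wc2; have := c1_c2 w; rewrite inE wc2 orbT inE negb_or.
  by case/(_ isT)/andP.
rewrite pE EE cycle_edges_split mem_cat !(inE, mem_cat).
case: (boolP (w \in c1)) => [/c1c2 wc2|wc1]; first by rewrite f2 ?orbT.
case: (boolP (w \in c2)) => [wc2|/f2 fc2]; first by rewrite f1 ?orbT.
by move: (f12 _ fc2); rewrite f1.
Qed.

Definition inseparable f g := exists S : {set T}, #|S| = 2 /\
  forall p, gcycle e p -> (forall x, x \in S -> x \in p) ->
    (f \in cycle_edges p) && (g \in cycle_edges p).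

Lemma inseparableC f g : inseparable f g -> inseparable g f.
Proof. by case=> S [S2 fg]; exists S; split=> // p cp Sp; rewrite andbC fg. Qed.

Lemma inseparable_meet f w1 X1 Y1 g w2 X2 Y2 x y :
  separation f w1 X1 Y1 -> separation g w2 X2 Y2 ->
  x \in X1 -> x \in X2 -> y \in Y1 -> y \in Y2 -> inseparable f g.
Proof.
move=> sep1 sep2 x1 x2 y1 y2; have [_ d1 _ _] := sep1.
have xy : x != y by apply: contraTneq y1 => <-; rewrite (disjointFr d1 x1).
exists [set x; y]; split=> [|p cp Sp]; first by rewrite cards2 xy.
have [px py] := (Sp x (set21 x y), Sp y (set22 x y)).
by rewrite (separation_cycle sep1 cp px x1 py y1).2 (separation_cycle sep2 cp px x2 py y2).2.
Qed.

(* Then X1 = [set w2]: the cut vertex w2 is an end of f, and all its neighbours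
   but w1 lie across f. *)
Lemma inseparable_pinched f w1 X1 Y1 g w2 X2 Y2 :
  separation f w1 X1 Y1 -> separation g w2 X2 Y2 -> X1 \subset [set w2] ->
  inseparable f g.
Proof.
move=> sep1 sep2 X1w2; have [_ _ [s1 [_ [s1X1 _ _]]] cross1] := sep1.
have [_ d2 [s2 [t2 [s2X2 t2Y2 _]]] _] := sep2.
have s1w2 : s1 = w2 by apply/set1P; apply: (subsetP X1w2).
have nbr y : e s1 y -> y != w1 -> [set s1; y] = f.
  move=> s1y yw1; apply: cross1 => //; apply: (separation_side sep1) => //.
  by apply/negP => /(subsetP X1w2)/set1P yw2; rewrite yw2 -s1w2 e_irr in s1y.
have s2t2 : s2 != t2 by apply: contraTneq t2Y2 => <-; rewrite (disjointFr d2 s2X2).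
exists [set s2; t2]; split=> [|p cp Sp]; first by rewrite cards2 s2t2.
have [p3 Up cyc] := cp.
have [ps1 ->] := separation_cycle sep2 cp (Sp s2 (set21 _ _)) s2X2 (Sp t2 (set22 _ _)) t2Y2.
rewrite -s1w2 in ps1; rewrite andbT.
case: (eqVneq (next p s1) w1) => [nw1|nw1].
  have pw1 : prev p s1 != w1 by rewrite -nw1 eq_sym next_prev_neq.
  by rewrite -(nbr _ _ pw1) ?prev_in_cycle_edges // e_sym prev_cycle.
by rewrite -(nbr _ (next_cycle cyc ps1) nw1) next_in_cycle_edges.
Qed.

Lemma separations_inseparable f w1 X1 Y1 g w2 X2 Y2 :
  separation f w1 X1 Y1 -> separation g w2 X2 Y2 -> inseparable f g.
Proof.
move=> sep1 sep2; have [sep1' sep2'] := (separation_sym sep1, separation_sym sep2).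
have meet (A B : {set T}) : ~~ [disjoint A & B] -> exists2 x, x \in A & x \in B.
  by case/pred0Pn => x /andP[]; exists x.
case: (boolP ([disjoint X1 & X2] || [disjoint Y1 & Y2]))
  => [d1|/norP[/meet[x x1 x2] /meet[y y1 y2]]];
  last exact: inseparable_meet sep1 sep2 x1 x2 y1 y2.
case: (boolP ([disjoint X1 & Y2] || [disjoint Y1 & X2]))
  => [d2|/norP[/meet[x x1 x2] /meet[y y1 y2]]];
  last exact: inseparable_meet sep1 sep2' x1 x2 y1 y2.
case/orP: d2 => [d12|d21]; case/orP: d1 => [d11|d22].
- exact: inseparable_pinched sep1 sep2 (separation_cover sep2 d11 d12).
- apply/inseparableC/(inseparable_pinched sep2' sep1)/(separation_cover sep1).
    by rewrite disjoint_sym.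
  by rewrite disjoint_sym.
- apply/inseparableC/(inseparable_pinched sep2 sep1)/(separation_cover sep1).
    by rewrite disjoint_sym.
  by rewrite disjoint_sym.
- exact: inseparable_pinched sep1' sep2 (separation_cover sep2 d21 d22).
Qed.

End Separation.

Section MinimallyTwoConnected.
Variables (T : finType) (e : rel T).
Hypotheses (e_sym : symmetric e) (e_irr : irreflexive e).
Implicit Types (f g : {set T}) (w x y : T).

Lemma cut_vertex_of_del_edge f : two_connected e -> f \in edges e ->
  ~ two_connected (del_edge e f) ->
  exists w x y, [/\ x != w, y != w & ~ connect (rel_on (del_edge e f) [set~ w]) x y].
Proof.
move=> G2 fE not2; have [T3 _ _] := G2.
apply: NNPP => none; apply: not2; split=> //; first exact: del_edge_connected.
move=> w x y; rewrite !in_setC1 => xw yw; apply: NNPP => nxy.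
by apply: none; exists w, x, y.
Qed.

Lemma del_edge_reach f w s t z : two_connected e -> f = [set s; t] -> w != s ->
  z != w -> connect (rel_on (del_edge e f) [set~ w]) s z ||
            connect (rel_on (del_edge e f) [set~ w]) t z.
Proof.
move=> [_ _ e_2conn] fE ws zw; set R := rel_on _ _.
have sz : connect (rel_on e [set~ w]) s z by apply: e_2conn; rewrite !inE // eq_sym.
apply: (connect_closed_prop (P := fun z => connect R s z || connect R t z)) sz; last first.
  by rewrite connect0.
move=> a b Pa /and3P[ab aw bw]; case: (eqVneq [set a; b] f) => [abf|abf].
  by move: (set22 a b); rewrite abf fE => /set2P[]->; rewrite connect0 ?orbT.
have Rab : R a b by rewrite /R /rel_on /del_edge /= ab abf aw bw.
by case/orP: Pa => /connect_trans/(_ (connect1 Rab)) ->; rewrite ?orbT.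
Qed.

Lemma separation_of_cut f w x y : two_connected e -> f \in edges e ->
  x != w -> y != w -> ~ connect (rel_on (del_edge e f) [set~ w]) x y ->
  exists X Y, separation e f w X Y.
Proof.
move=> G2 /edgesP[s [t [st fE]]] xw yw nxy; set R := rel_on _ _ in nxy.
have R_sym : connect_sym R := sym_connect_sym (rel_on_sym _ (del_edge_sym e_sym _)).
have [ws wt] : w != s /\ w != t.
  suff : w \notin f by rewrite fE !inE negb_or => /andP[].
  apply/negP => wf; apply: nxy; have [_ _ e_2conn] := G2.
  by apply: connect_subrel (rel_on_del_edge wf) _ _ (e_2conn w x y _ _); rewrite !inE.
have st' : ~~ connect R s t.
  apply/negP => st'; apply: nxy.
  have conn_s z : z != w -> connect R s z.
    by move/(del_edge_reach G2 fE ws)/orP => [//|]; apply: connect_trans st'.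
  by apply: connect_trans (conn_s y yw); rewrite R_sym conn_s.
exists [set z | (z != w) && connect R s z], [set z | (z != w) && ~~ connect R s z]; split.
- by apply/setP => z; rewrite !inE -andb_orr orbN andbT.
- by rewrite -setI_eq0; apply/eqP/setP => z; rewrite !inE andbACA andbN andbF.
- by exists s, t; rewrite fE !inE connect0 st' eq_sym ws eq_sym wt.
- move=> a b; rewrite !inE => /andP[aw sa] /andP[bw nsb] ab; apply: contraNeq nsb => abf.
  by apply: connect_trans sa (connect1 _); rewrite /R /rel_on /del_edge /= ab abf !inE aw bw.
Qed.

Lemma min_two_connected_no_separable :
  min_two_connected e -> ~ exists f g, separable e 2 f g.
Proof.
case=> G2 minG [f [g [fE gE _ sep_fg]]].
have sep_of h : h \in edges e -> exists w X Y, separation e h w X Y.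
  move=> hE; have [w [x [y [xw yw nxy]]]] := cut_vertex_of_del_edge G2 hE (minG h hE).
  by have [X [Y sepXY]] := separation_of_cut G2 hE xw yw nxy; exists w, X, Y.
have [w1 [X1 [Y1 sep1]]] := sep_of f fE; have [w2 [X2 [Y2 sep2]]] := sep_of g gE.
have [S [S2 forced]] := separations_inseparable e_sym e_irr sep1 sep2.
by have [p [cp Sp /negP[]]] := sep_fg S S2; apply: forced.
Qed.

Lemma del_edge_edges f (S : {set T}) : S \in edges (del_edge e f) -> S \in edges e /\ S != f.
Proof. by case/edgesP=> x [y [/andP[xy xyf] ->]]; split=> //; apply: edge_in_edges. Qed.

Lemma del_edge_two_connected_separable f : two_connected e -> f \in edges e ->
  two_connected (del_edge e f) -> exists g, separable e 2 f g.
Proof.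
move=> G2 fE Gf2.
have cycle_Gf x y : x != y ->
    exists p, [/\ gcycle e p, x \in p, y \in p & f \notin cycle_edges p].
  move=> xy; have [p [[p3 Up cp] px py]] :=
    two_connected_cycle_through (del_edge_sym e_sym f) (del_edge_irr e_irr f) Gf2 xy.
  exists p; split=> //; first by split=> //; apply: sub_cycle cp; apply: del_edge_sub.
  apply/negP => /(cycle_edges_sub (And3 p3 Up cp))/del_edge_edges[_].
  by rewrite eqxx.
have /edgesP[s [t [st _]]] := fE.
have s_t : s != t by apply: contraTneq st => ->; rewrite e_irr.
have [p [cp _ _ fp]] := cycle_Gf s t s_t.
have [g gp] := gcycle_edge cp.
exists g; split=> //; first exact: (cycle_edges_sub cp).
  by apply: contraNneq fp => ->.
move=> S /eqP/cards2P[x [y [xy ->]]]; have [q [cq qx qy fq]] := cycle_Gf x y xy.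
by exists q; split=> [//|z /set2P[]->//|]; rewrite (negbTE fq).
Qed.

Lemma two_connected_crx2_eq : two_connected e ->
  crx e 2 = #|edges e| <-> min_two_connected e.
Proof.
move=> G2; rewrite (crx_eq_size_edges (two_connected_in_F2 e_sym e_irr G2)); split.
  move=> no_sep; split=> // f fE Gf2; apply: no_sep.
  by have [g sep_fg] := del_edge_two_connected_separable G2 fE Gf2; exists f, g.
exact: min_two_connected_no_separable.
Qed.

End MinimallyTwoConnected.

Theorem theorem2p4 (T : finType) (e : rel T)
  (e_sym : symmetric e) (e_irr : irreflexive e) (n_ge3 : 3 <= #|T|) :
  ((forall v : T, exists p, gcycle e p /\ v \in p) ->
     (crx e 1 = #|edges e| <-> is_cycle_graph e))
  /\ (two_connected e ->
     (crx e 2 = #|edges e| <-> min_two_connected e))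
  /\ (hamiltonian e -> forall k, 1 <= k <= #|T| ->
     (crx e k = #|edges e| <-> is_cycle_graph e)).
Proof.
split; first by move=> cover; apply: cycle_cover_crx1_eq.
split; first exact: two_connected_crx2_eq.
by move=> ham k /andP[_ kT]; apply: hamiltonian_crx_eq.
Qed.
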